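(* Let $X$ be a real random variable with density $p$, $\mathbb{E}X=0$, $\mathrm{Var}(X)=1$, $\mathbb{E}|X|^s<\infty$ for some $s>2$, and suppose $\|p-\phi\|_2\le1$. Then there exist $C_1,C_2>0$ such that \[ D(X)\le C_1\big(\|p-\phi\|_1+\|p-\phi\|_2\big)+C_2(\mathbb{E}|X|^s)^{2/s}\big(\|p-\phi\|_1+\|p-\phi\|_2\big)^{1-2/s}. \]
   Context: $\phi(x)=(2\pi)^{-1/2}e^{-x^2/2}$. $D(X)$ denotes the Kullback–Leibler divergence of $X$ from a Gaussian with the same mean and variance as $X$; here $D(X)=\int p\ln(p/\phi)$. $\|\cdot\|_q$ is the $L^q(\mathbb{R})$ norm. *)

From HB Require Import structures.
From mathcomp Require Import all_boot all_order all_algebra.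
From mathcomp Require Import all_classical all_reals all_analysis.
Set Implicit Arguments. Unset Strict Implicit. Unset Printing Implicit Defensive.
Import Order.TTheory GRing.Theory Num.Theory.
Local Open Scope ring_scope.

Section defs.
Variable R : realType.
Local Notation mu := (@lebesgue_measure R).

Definition phi (x : R) : R := expR (- (x ^+ 2) / 2) / Num.sqrt (2 * pi).

Definition is_density (p : R -> R) : Prop :=
  measurable_fun [set: R] p /\ (forall x, 0 <= p x) /\
  (\int[mu]_x (p x)%:E = 1)%E.

Definition mean_zero (p : R -> R) : Prop :=
  mu.-integrable [set: R] (fun x => (x * p x)%:E) /\
  (\int[mu]_x (x * p x)%:E = 0)%E.

(* E X^2 = 1; together with E X = 0 this is Var(X) = 1 *)
Definition second_moment_one (p : R -> R) : Prop :=
  (\int[mu]_x (x ^+ 2 * p x)%:E = 1)%E.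

Definition abs_moment (s : R) (p : R -> R) : \bar R :=
  (\int[mu]_x ((`|x| `^ s) * p x)%:E)%E.

Definition Lq_dist (q : R) (p : R -> R) : \bar R :=
  Lnorm mu q%:E (fun x => (p x - phi x)%:E).

(* D(X) = int p ln (p/phi)  (with 0 ln 0 = 0; extended-real valued) *)
Definition Dgauss (p : R -> R) : \bar R :=
  (\int[mu]_x (p x * ln (p x / phi x))%:E)%E.

End defs.

(* Split the integrand of [D(X) = \int p ln (p / phi)] at a level [T >= 1].
   Where [|x| <= T], [ln y <= y - 1] gives [p ln (p / phi) <= |p - phi| + (p - phi)^2 / phi]
   and [1 / phi <= sqrt (2 pi) e^(T^2/2)].  Where [|x| > T],
   [p ln (p / phi) <= 2 (p - phi)^2 + 2 phi^2 + (1/2 + |ln sqrt (2 pi)|) x^2 p]; then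
   [x^2 <= t^(2-s) |x|^s + t^2] and [p <= |p - phi| + phi] leave a moment term, an [L^1]
   term and a Gaussian tail, which is dominated by [e^(-T^2/2) (phi (x - T) + phi (x + T))]
   and so has mass at most [2 e^(-T^2/2)].  With [w = ||p - phi||_1 + ||p - phi||_2],
   the choices [e^(-T^2/2) = min w e^(-1/2)] and [t^s = E|X|^s / w] make every term
   [O(w)] or [O((E|X|^s)^(2/s) w^(1-2/s))]; the case [w = 0] follows by letting [w] tend
   to [0].  The normalisation [E X^2 = 1] only serves to make [E|X|^s > 0]. *)

From HB Require Import structures.
From mathcomp Require Import all_boot all_order all_algebra.
From mathcomp Require Import all_classical all_reals all_analysis.
From mathcomp Require Import measurable_realfun.
From mathcomp Require Import ring lra.
Set Implicit Arguments.
Unset Strict Implicit.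
Unset Printing Implicit Defensive.
Import Order.TTheory GRing.Theory Num.Theory.
Local Open Scope ring_scope.

Section gaussian.
Variable R : realType.
Implicit Types x m T : R.

Definition sqrt2pi : R := Num.sqrt (2 * pi).

Lemma sqrt2pi_gt0 : 0 < sqrt2pi.
Proof. by rewrite sqrtr_gt0 mulr_gt0 ?pi_gt0. Qed.

Lemma normal_pdf1E m x : normal_pdf m 1 x = expR (- ((x - m) ^+ 2) / 2) / sqrt2pi.
Proof.
rewrite normal_pdfE ?oner_eq0 // /normal_peak /normal_fun /sqrt2pi.
by rewrite expr1n mul1r mulr_natl mulrC.
Qed.

Lemma phi_normal_pdf : @phi R = normal_pdf 0 1.
Proof. by apply/funext => x; rewrite normal_pdf1E subr0. Qed.

Lemma phi_gt0 x : 0 < phi x.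
Proof. by rewrite divr_gt0 ?expR_gt0 ?sqrt2pi_gt0. Qed.

Lemma phi_le x : phi x <= sqrt2pi^-1.
Proof.
rewrite /phi ler_pdivrMr ?sqrt2pi_gt0 // mulVf ?gt_eqF ?sqrt2pi_gt0 //.
by rewrite expR_le1 mulNr oppr_le0 divr_ge0 ?sqr_ge0.
Qed.

Lemma invr_phi x : (phi x)^-1 = sqrt2pi * expR (x ^+ 2 / 2).
Proof. by rewrite /phi invf_div mulNr expRN invrK. Qed.

Lemma ln_phi x : ln (phi x) = - (x ^+ 2 / 2) - ln sqrt2pi.
Proof. by rewrite ln_div ?expRK ?mulNr // posrE ?expR_gt0 ?sqrt2pi_gt0. Qed.

Lemma measurable_phi : measurable_fun setT (@phi R).
Proof. rewrite phi_normal_pdf; exact: measurable_normal_pdf. Qed.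

Lemma integral_phi : (\int[lebesgue_measure]_x (phi x : R)%:E = 1)%E.
Proof. rewrite phi_normal_pdf; exact: integral_normal_pdf. Qed.

Definition normal_pair T x : R := normal_pdf T 1 x + normal_pdf (- T) 1 x.

Lemma normal_pair_ge0 T x : 0 <= normal_pair T x.
Proof. by rewrite addr_ge0 ?normal_pdf_ge0. Qed.

Lemma measurable_normal_pair T : measurable_fun setT (normal_pair T).
Proof. by apply: measurable_funD; exact: measurable_normal_pdf. Qed.

Lemma integral_normal_pair T :
  (\int[lebesgue_measure]_x (normal_pair T x)%:E = 2%:E)%E.
Proof.
under eq_integral do rewrite EFinD.
rewrite ge0_integralD ?integral_normal_pdf //.
- by move=> x _; rewrite lee_fin normal_pdf_ge0.
- by apply/measurable_EFinP; exact: measurable_normal_pdf.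
- by move=> x _; rewrite lee_fin normal_pdf_ge0.
- by apply/measurable_EFinP; exact: measurable_normal_pdf.
Qed.

(* [x^2 = T^2 + (x - m)^2 + 2 (x m - T^2)] when [m^2 = T^2] *)
Lemma phi_le_shifted T m x : m ^+ 2 = T ^+ 2 -> T ^+ 2 <= x * m ->
  phi x <= expR (- (T ^+ 2) / 2) * normal_pdf m 1 x.
Proof.
move=> mT Txm; rewrite normal_pdf1E mulrA -expRD /phi.
apply: ler_wpM2r; first by rewrite invr_ge0 ltW ?sqrt2pi_gt0.
rewrite ler_expR !mulNr -opprD lerN2 -mulrDl.
apply: ler_wpM2r; first by rewrite invr_ge0 ler0n.
have -> : T ^+ 2 + (x - m) ^+ 2 = x ^+ 2 - 2 * (x * m - T ^+ 2) by rewrite sqrrB mT; ring.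
by rewrite lerBlDr lerDl mulr_ge0 ?subr_ge0.
Qed.

Lemma phi_le_normal_pair T x : 0 <= T <= `|x| ->
  phi x <= expR (- (T ^+ 2) / 2) * normal_pair T x.
Proof.
move=> /andP[T0 Tx]; rewrite /normal_pair mulrDr.
have G0 m : 0 <= expR (- (T ^+ 2) / 2) * normal_pdf m 1 x.
  by rewrite mulr_ge0 ?expR_ge0 ?normal_pdf_ge0.
have [x0|x0] := lerP 0 x.
  rewrite ger0_norm // in Tx.
  apply: le_trans (@phi_le_shifted T T x erefl _) _; first by rewrite expr2 ler_pM.
  by rewrite lerDl.
rewrite ltr0_norm // in Tx.
apply: le_trans (@phi_le_shifted T (- T) x (sqrrN T) _) _; last by rewrite lerDr.
by rewrite expr2 mulrN -mulNr ler_pM.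
Qed.

End gaussian.
Arguments sqrt2pi {R}.
Arguments sqrt2pi_gt0 {R}.

Section elementary.
Variable R : realType.
Implicit Types p q s t x T : R.

Lemma mulr_ln_div_le p q : 0 <= p -> 0 < q -> p * ln (p / q) <= p * (p / q - 1).
Proof.
rewrite le_eqVlt => /predU1P[<-|p0 q0]; first by rewrite !mul0r.
apply: ler_wpM2l; first exact: ltW.
have := @le_ln1Dx R (p / q - 1); rewrite addrCA subrr addr0; apply.
by rewrite ltrBrDl subrr divr_gt0.
Qed.

Lemma sqr_le_normr x T : `|x| <= T -> x ^+ 2 <= T ^+ 2.
Proof.
move=> xT; rewrite -(real_normK (num_real x)) ler_sqr ?nnegrE //.
exact: le_trans xT.
Qed.

Lemma sqr_ge_normr x T : 0 <= T -> T <= `|x| -> T ^+ 2 <= x ^+ 2.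
Proof. by move=> T0 Tx; rewrite -(real_normK (num_real x)) ler_sqr ?nnegrE. Qed.

Lemma sqr_le_powR s t x : 2 <= s -> 0 < t ->
  x ^+ 2 <= t ^+ 2 / t `^ s * `|x| `^ s + t ^+ 2.
Proof.
move=> s2 t0; have ts0 : 0 < t `^ s by exact: powR_gt0.
have [xt|tx] := lerP `|x| t.
  apply: le_trans (sqr_le_normr xt) _.
  by rewrite lerDr mulr_ge0 ?divr_ge0 ?powR_ge0 ?sqr_ge0.
suff dom : x ^+ 2 <= t ^+ 2 / t `^ s * `|x| `^ s.
  by apply: le_trans dom _; rewrite lerDl sqr_ge0.
have r1 : 1 <= `|x| / t by rewrite ler_pdivlMr // mul1r ltW.
have -> : x ^+ 2 = t ^+ 2 * (`|x| / t) `^ 2%:R.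
  rewrite powR_mulrn ?(le_trans ler01) // exprMn exprVn mulrCA mulfV ?expf_neq0 ?gt_eqF //.
  by rewrite mulr1 real_normK ?num_real.
rewrite -mulrA; apply: ler_wpM2l; first exact: sqr_ge0.
have -> : (t `^ s)^-1 * `|x| `^ s = (`|x| / t) `^ s.
  have := powRM s (divr_ge0 (normr_ge0 x) (ltW t0)) (ltW t0).
  by rewrite divfK ?gt_eqF // => ->; rewrite mulrC mulfK ?gt_eqF.
exact: ler_powR.
Qed.

End elementary.

Section pointwise.
Variable R : realType.
Implicit Types p x T : R.

Definition tail_coef : R := 2^-1 + `|ln sqrt2pi|.

Lemma tail_coef_ge0 : 0 <= tail_coef.
Proof. by rewrite addr_ge0 ?invr_ge0 ?ler0n. Qed.

Lemma relent_le_center p x T : 0 <= p -> `|x| <= T ->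
  p * ln (p / phi x) <= `|p - phi x| + sqrt2pi * expR (T ^+ 2 / 2) * (p - phi x) ^+ 2.
Proof.
move=> p0 xT; apply: le_trans (mulr_ln_div_le p0 (phi_gt0 x)) _.
have -> : p * (p / phi x - 1) = (p - phi x) + (p - phi x) ^+ 2 * (phi x)^-1.
  by field; rewrite gt_eqF ?phi_gt0.
apply: lerD; first exact: ler_norm.
rewrite mulrC; apply: ler_wpM2r; first exact: sqr_ge0.
rewrite invr_phi; apply: ler_wpM2l; first exact: ltW sqrt2pi_gt0.
by rewrite ler_expR ler_wpM2r ?invr_ge0 ?ler0n ?sqr_le_normr.
Qed.

Lemma relent_le_tail p x T : 0 <= p -> 1 <= T <= `|x| ->
  p * ln (p / phi x) <=
  2 * (p - phi x) ^+ 2 + 2 / sqrt2pi * phi x + tail_coef * (x ^+ 2 * p).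
Proof.
move=> p0 /andP[T1 Tx]; set h := p - phi x.
have ph := phi_gt0 x.
have x1 : 1 <= x ^+ 2 by rewrite -(expr1n _ 2) sqr_ge_normr ?ler01 ?(le_trans T1).
have xp0 : 0 <= x ^+ 2 * p by rewrite mulr_ge0 ?sqr_ge0.
have rest0 : 0 <= 2 * h ^+ 2 + 2 / sqrt2pi * phi x + tail_coef * (x ^+ 2 * p).
  apply: addr_ge0; last exact: mulr_ge0 tail_coef_ge0 xp0.
  apply: addr_ge0; first exact: mulr_ge0 (ler0n _ 2) (sqr_ge0 h).
  exact: mulr_ge0 (divr_ge0 (ler0n _ 2) (ltW sqrt2pi_gt0)) (ltW ph).
have [p00|pn0] := eqVneq p 0; first by move: rest0; rewrite p00 mul0r.
have {pn0}p0 : 0 < p by rewrite lt_neqAle eq_sym pn0.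
have plnp : p * ln p <= p ^+ 2.
  have := mulr_ln_div_le (ltW p0) ltr01; rewrite !divr1; nra.
have psq : p ^+ 2 <= 2 * h ^+ 2 + 2 / sqrt2pi * phi x.
  have : phi x ^+ 2 <= sqrt2pi^-1 * phi x.
    by rewrite expr2; apply: ler_wpM2r; [exact: ltW | exact: phi_le].
  have := sqr_ge0 (phi x - h); rewrite /h; nra.
have pc : p * ln sqrt2pi <= `|ln sqrt2pi| * (x ^+ 2 * p).
  have := mulr_ge0 (normr_ge0 (ln sqrt2pi : R)) (ltW p0).
  have := ler_norm (ln sqrt2pi : R); nra.
rewrite ln_div ?posrE // ln_phi /tail_coef.
have -> : p * (ln p - (- (x ^+ 2 / 2) - ln sqrt2pi)) =
  p * ln p + 2^-1 * (x ^+ 2 * p) + p * ln sqrt2pi by field.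
rewrite mulrDl; lra.
Qed.

Definition relent_majorant (p : R -> R) (s T t x : R) : R :=
  (1 + tail_coef * t ^+ 2) * `|p x - phi x|
  + (2 + sqrt2pi * expR (T ^+ 2 / 2)) * (p x - phi x) ^+ 2
  + (2 / sqrt2pi + tail_coef * t ^+ 2) * (expR (- (T ^+ 2) / 2) * normal_pair T x)
  + tail_coef * (t ^+ 2 / t `^ s) * (`|x| `^ s * p x).

Lemma relent_le_majorant (p : R -> R) (s T t x : R) : 2 <= s -> 0 <= p x -> 1 <= T -> 0 < t ->
  p x * ln (p x / phi x) <= relent_majorant p s T t x.
Proof.
move=> s2 p0 T1 t0; rewrite /relent_majorant.
set h := p x - phi x; set G := expR (- (T ^+ 2) / 2) * normal_pair T x.
set k := t ^+ 2 / t `^ s; set A := `|x| `^ s * p x.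
have tc0 := tail_coef_ge0.
have G0 : 0 <= G by rewrite mulr_ge0 ?expR_ge0 ?normal_pair_ge0.
have A0 : 0 <= A by rewrite mulr_ge0 ?powR_ge0.
have k0 : 0 <= k by rewrite divr_ge0 ?sqr_ge0 ?powR_ge0.
have t2 : 0 <= t ^+ 2 := sqr_ge0 t.
have kap0 : 0 <= 2 / sqrt2pi :> R by rewrite divr_ge0 ?ler0n ?ltW ?sqrt2pi_gt0.
have h2 := sqr_ge0 h; have h1 := normr_ge0 h.
have tch : 0 <= tail_coef * t ^+ 2 * `|h| := mulr_ge0 (mulr_ge0 tc0 t2) h1.
have tcG : 0 <= tail_coef * t ^+ 2 * G := mulr_ge0 (mulr_ge0 tc0 t2) G0.
have kG : 0 <= 2 / sqrt2pi * G := mulr_ge0 kap0 G0.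
have tcA : 0 <= tail_coef * k * A := mulr_ge0 (mulr_ge0 tc0 k0) A0.
have sh : 0 <= sqrt2pi * expR (T ^+ 2 / 2) * h ^+ 2.
  exact: mulr_ge0 (mulr_ge0 (ltW sqrt2pi_gt0) (expR_ge0 _)) h2.
have [xT|Tx] := lerP `|x| T.
  have := relent_le_center p0 xT; rewrite -/h; lra.
have phiG : phi x <= G by apply: phi_le_normal_pair; rewrite (le_trans ler01) // ltW.
have ph : p x <= `|h| + phi x by rewrite -lerBlDr ler_norm.
have xp : x ^+ 2 * p x <= k * A + t ^+ 2 * (`|h| + G).
  have := ler_wpM2r p0 (sqr_le_powR x s2 t0); rewrite -/k mulrDl => /le_trans; apply.
  rewrite -mulrA -/A lerD2l.
  by apply: ler_wpM2l => //; lra.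
have T1x : 1 <= T <= `|x| by rewrite T1 ltW.
have := relent_le_tail p0 T1x; rewrite -/h => tail.
have := ler_wpM2l tc0 xp; have := ler_wpM2l kap0 phiG; lra.
Qed.

End pointwise.
Arguments tail_coef {R}.
Arguments tail_coef_ge0 {R}.

Section nonneg_integral.
Context d (T : measurableType d) (R : realType) (mu : {measure set T -> \bar R}).
Implicit Types f g : T -> R.

Definition nonneg_measurable f := measurable_fun setT f /\ forall x, 0 <= f x.

Lemma nonneg_measurableD f g : nonneg_measurable f -> nonneg_measurable g ->
  nonneg_measurable (fun x => f x + g x).
Proof.
by move=> [mf f0] [mg g0]; split=> [|x]; [exact: measurable_funD | rewrite addr_ge0].
Qed.

Lemma nonneg_measurableZ k f : 0 <= k -> nonneg_measurable f ->
  nonneg_measurable (fun x => k * f x).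
Proof.
by move=> k0 [mf f0]; split=> [|x]; [exact: measurable_funM | rewrite mulr_ge0].
Qed.

Lemma ge0_integralD_real f g : nonneg_measurable f -> nonneg_measurable g ->
  (\int[mu]_x (f x + g x)%:E = \int[mu]_x (f x)%:E + \int[mu]_x (g x)%:E)%E.
Proof.
move=> [mf f0] [mg g0]; under eq_integral do rewrite EFinD.
rewrite ge0_integralD //.
- by move=> x _; rewrite lee_fin.
- exact/measurable_EFinP.
- by move=> x _; rewrite lee_fin.
- exact/measurable_EFinP.
Qed.

Lemma ge0_integralZl_real k f : 0 <= k -> nonneg_measurable f ->
  (\int[mu]_x (k * f x)%:E = k%:E * \int[mu]_x (f x)%:E)%E.
Proof.
move=> k0 [mf f0]; under eq_integral do rewrite EFinM.
by rewrite ge0_integralZl_EFin // => [x _|]; rewrite ?lee_fin //; exact/measurable_EFinP.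
Qed.

(* [\int f] is [\int f^+ - \int f^-], and [f^+ <= g] *)
Lemma le_integral_ge0_real f g : measurable_fun setT f -> nonneg_measurable g ->
  (forall x, f x <= g x) -> (\int[mu]_x (f x)%:E <= \int[mu]_x (g x)%:E)%E.
Proof.
move=> mf [mg g0] fg; rewrite [leLHS]integralE.
apply: le_trans (_ : _ <= \int[mu]_x ((fun x => (f x)%:E)^\+ x))%E _.
  rewrite -[leRHS]sube0; apply: leeB => //.
  by apply: integral_ge0 => x _; exact: funeneg_ge0.
apply: ge0_le_integral => //.
- by apply: measurable_funepos; exact/measurable_EFinP.
- exact/measurable_EFinP.
- by move=> x _; rewrite funeposE ge_max !lee_fin g0 fg.
Qed.

End nonneg_integral.

Section relative_entropy.
Variable R : realType.
Local Notation mu := (@lebesgue_measure R).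
Implicit Types (p : R -> R) (s T t : R).

Lemma density_nonneg_measurable p : is_density p -> nonneg_measurable p.
Proof. by case=> mp [p0 _]. Qed.

Lemma nonneg_measurable_abs_dist p : measurable_fun setT p ->
  nonneg_measurable (fun x => `|p x - phi x|).
Proof.
move=> mp; split=> // ; apply: measurableT_comp; first exact: normr_measurable.
by apply: measurable_funB => //; exact: measurable_phi.
Qed.

Lemma nonneg_measurable_sqr_dist p : measurable_fun setT p ->
  nonneg_measurable (fun x => (p x - phi x) ^+ 2).
Proof.
move=> mp; split=> [|x]; last exact: sqr_ge0.
by apply: measurable_funX; apply: measurable_funB => //; exact: measurable_phi.
Qed.

Lemma nonneg_measurable_moment s p : nonneg_measurable p ->
  nonneg_measurable (fun x : R => `|x| `^ s * p x).
Proof.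
move=> [mp p0]; split=> [|x]; last by rewrite mulr_ge0 ?powR_ge0.
apply: measurable_funM => //.
exact: measurableT_comp (measurable_powR s) (@normr_measurable R setT).
Qed.

Lemma nonneg_measurable_normal_pair T : nonneg_measurable (@normal_pair R T).
Proof. by split; [exact: measurable_normal_pair | exact: normal_pair_ge0]. Qed.

Lemma measurable_relent p : measurable_fun setT p ->
  measurable_fun setT (fun x => p x * ln (p x / phi x)).
Proof.
move=> mp; under eq_fun do rewrite invr_phi.
apply: measurable_funM => //; apply: measurableT_comp; first exact: measurable_ln.
apply: measurable_funM => //; apply: measurable_funM => //.
by apply: measurableT_comp; [exact: measurable_expR | exact: measurable_funM].
Qed.

Lemma Lq_dist1E p : Lq_dist 1 p = (\int[mu]_x (`|p x - phi x|)%:E)%E.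
Proof. by rewrite /Lq_dist Lnorm1; apply: eq_integral => x _; rewrite abse_EFin. Qed.

Lemma Lq_dist2E p : (Lq_dist 2 p `^ 2)%E = (\int[mu]_x ((p x - phi x) ^+ 2)%:E)%E.
Proof.
rewrite /Lq_dist poweR_Lnorm ?pnatr_eq0 //; apply: eq_integral => x _.
by rewrite abse_EFin poweR_EFin powR_mulrn // real_normK ?num_real.
Qed.

Lemma Lq_dist1_le2 p : is_density p -> (Lq_dist 1 p <= 2%:E)%E.
Proof.
move=> hp; have [mp [p0 ip]] := hp; rewrite Lq_dist1E.
have np := density_nonneg_measurable hp.
have nm_phi : nonneg_measurable (@phi R).
  by split=> [|x]; [exact: measurable_phi | exact: ltW (phi_gt0 x)].
apply: le_trans (le_integral_ge0_real mu (nonneg_measurable_abs_dist mp).1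
  (nonneg_measurableD np nm_phi) _) _.
  move=> x; apply: le_trans (ler_normB _ _) _.
  by rewrite !ger0_norm // ltW // phi_gt0.
by rewrite ge0_integralD_real // ip integral_phi.
Qed.

Lemma abs_moment_gt0 s p : 2 <= s -> is_density p -> second_moment_one p ->
  (0 < abs_moment s p)%E.
Proof.
move=> s2 hp hm; set t : R := 2^-1.
have t0 : 0 < t by rewrite invr_gt0 ltr0n.
have k0 : 0 <= t ^+ 2 / t `^ s by rewrite divr_ge0 ?sqr_ge0 ?powR_ge0.
have np := density_nonneg_measurable hp; have [mp [p0 ip]] := hp.
have nmx := nonneg_measurable_moment s np.
have nk := nonneg_measurableZ k0 nmx; have nt := nonneg_measurableZ (sqr_ge0 t) np.
have nmx2 : nonneg_measurable (fun x : R => x ^+ 2 * p x).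
  by split=> [|x]; [exact: measurable_funM | rewrite mulr_ge0 ?sqr_ge0 ?p0].
have : (1 <= (t ^+ 2 / t `^ s)%:E * abs_moment s p + (t ^+ 2)%:E)%E.
  rewrite -hm -[X in (_ + X)%E]mule1 -ip -!ge0_integralZl_real ?sqr_ge0 //.
  rewrite -ge0_integralD_real //.
  apply: (le_integral_ge0_real mu nmx2.1 (nonneg_measurableD nk nt)).
  by move=> x; rewrite mulrA -mulrDl ler_wpM2r ?sqr_le_powR.
have M0 : (0 <= abs_moment s p)%E.
  by apply: integral_ge0 => x _; rewrite lee_fin nmx.2.
move=> le1; rewrite lt_neqAle M0 andbT; apply/eqP => M00.
by move: le1; rewrite -M00 mule0 add0e lee_fin /t expr2; lra.
Qed.

Definition relent_bound (s T t a b m : R) : R :=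
  (1 + tail_coef * t ^+ 2) * a + (2 + sqrt2pi * expR (T ^+ 2 / 2)) * b ^+ 2
  + (2 / sqrt2pi + tail_coef * t ^+ 2) * (expR (- (T ^+ 2) / 2) * 2)
  + tail_coef * (t ^+ 2 / t `^ s) * m.

Lemma Dgauss_le_relent_bound p s T t a b m : 2 <= s -> is_density p -> 1 <= T -> 0 < t ->
  Lq_dist 1 p = a%:E -> Lq_dist 2 p = b%:E -> abs_moment s p = m%:E ->
  (Dgauss p <= (relent_bound s T t a b m)%:E)%E.
Proof.
move=> s2 hp T1 t0 La Lb Mm; have np := density_nonneg_measurable hp; have [mp p0] := np.
have tc0 := @tail_coef_ge0 R; have t2 := sqr_ge0 t.
have c1 : 0 <= 1 + tail_coef * t ^+ 2 := addr_ge0 ler01 (mulr_ge0 tc0 t2).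
have c2 : 0 <= 2 + sqrt2pi * expR (T ^+ 2 / 2).
  exact: addr_ge0 (ler0n _ 2) (mulr_ge0 (ltW sqrt2pi_gt0) (expR_ge0 _)).
have c3 : 0 <= 2 / sqrt2pi + tail_coef * t ^+ 2.
  exact: addr_ge0 (divr_ge0 (ler0n _ 2) (ltW sqrt2pi_gt0)) (mulr_ge0 tc0 t2).
have c4 : 0 <= tail_coef * (t ^+ 2 / t `^ s) := mulr_ge0 tc0 (divr_ge0 t2 (powR_ge0 _ _)).
have n1 := nonneg_measurable_abs_dist mp; have n2 := nonneg_measurable_sqr_dist mp.
have n3 := nonneg_measurableZ (expR_ge0 (- (T ^+ 2) / 2)) (nonneg_measurable_normal_pair T).
have n4 := nonneg_measurable_moment s np.
have n1' := nonneg_measurableZ c1 n1; have n2' := nonneg_measurableZ c2 n2.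
have n3' := nonneg_measurableZ c3 n3; have n4' := nonneg_measurableZ c4 n4.
have n12 := nonneg_measurableD n1' n2'; have n123 := nonneg_measurableD n12 n3'.
have nmaj := nonneg_measurableD n123 n4'.
apply: le_trans (le_integral_ge0_real mu (measurable_relent mp) nmaj _) _.
  by move=> x; exact: relent_le_majorant.
have Ib : (\int[mu]_x ((p x - phi x) ^+ 2)%:E = (b ^+ 2)%:E)%E.
  have b0 : 0 <= b by rewrite -lee_fin -Lb Lnorm_ge0.
  by rewrite -Lq_dist2E Lb poweR_EFin powR_mulrn.
rewrite !ge0_integralD_real //.
rewrite (ge0_integralZl_real mu c1 n1) (ge0_integralZl_real mu c2 n2).
rewrite (ge0_integralZl_real mu c3 n3) (ge0_integralZl_real mu c4 n4).
rewrite ge0_integralZl_real ?expR_ge0 //; last exact: nonneg_measurable_normal_pair.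
rewrite -Lq_dist1E La Ib integral_normal_pair -/(abs_moment s p) Mm.
by rewrite -!EFinM -!EFinD.
Qed.

Lemma Lq_dist_abs_moment_EFin s p : 2 <= s -> is_density p -> second_moment_one p ->
  (abs_moment s p < +oo)%E -> (Lq_dist 2 p <= 1)%E ->
  exists a b m : R, [/\ Lq_dist 1 p = a%:E, Lq_dist 2 p = b%:E & abs_moment s p = m%:E]
    /\ [/\ 0 <= a, 0 <= b, b <= 1 & 0 < m].
Proof.
move=> s2 hp hm Mfin L2le1.
have L1ge0 := Lnorm_ge0 mu 1%:E (fun x => (p x - phi x)%:E).
have L2ge0 := Lnorm_ge0 mu 2%:E (fun x => (p x - phi x)%:E).
have Mgt0 := abs_moment_gt0 s2 hp hm.
have L1fin : Lq_dist 1 p \is a fin_num.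
  by rewrite ge0_fin_numE // (le_lt_trans (Lq_dist1_le2 hp)) ?ltry.
have L2fin : Lq_dist 2 p \is a fin_num.
  by rewrite ge0_fin_numE // (le_lt_trans L2le1) ?ltry.
have {}Mfin : abs_moment s p \is a fin_num by rewrite ge0_fin_numE // ltW.
exists (fine (Lq_dist 1 p)), (fine (Lq_dist 2 p)), (fine (abs_moment s p)).
by rewrite !fineK // -!lee_fin -lte_fin !fineK.
Qed.

End relative_entropy.

Section scaling.
Variable R : realType.
Implicit Types a b m s t u w T : R.

Definition relent_C1 : R := 3 + sqrt2pi * expR 2^-1 + 4 / sqrt2pi.
Definition relent_C2 : R := 4 * tail_coef.

Lemma relent_C1_gt0 : 0 < relent_C1.
Proof.
have s0 := ltW (@sqrt2pi_gt0 R).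
have := mulr_ge0 s0 (expR_ge0 2^-1); have := divr_ge0 (ler0n R 4) s0.
rewrite /relent_C1; lra.
Qed.

Lemma relent_C2_gt0 : 0 < relent_C2.
Proof. by rewrite /relent_C2 mulr_gt0 ?ltr0n // ltr_pwDl ?invr_gt0 ?ltr0n. Qed.

Lemma relent_bound_le s T t a b m w : 0 <= a -> a <= w -> 0 <= b -> b ^+ 2 <= w ->
  expR (- (T ^+ 2) / 2) <= w -> b ^+ 2 * expR (T ^+ 2 / 2) <= w * expR 2^-1 ->
  t ^+ 2 / t `^ s * m = t ^+ 2 * w ->
  relent_bound s T t a b m <= relent_C1 * w + relent_C2 * (t ^+ 2 * w).
Proof.
move=> a0 aw b0 bw uw bu tm.
rewrite /relent_bound /relent_C1 /relent_C2 -mulrA tm.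
have tc0 := @tail_coef_ge0 R; have t2 := sqr_ge0 t.
have k0 : 0 <= sqrt2pi^-1 :> R by rewrite invr_ge0 ltW ?sqrt2pi_gt0.
have h1 := ler_wpM2l (mulr_ge0 tc0 t2) aw.
have h2 := ler_wpM2l (mulr_ge0 tc0 t2) uw.
have h3 := ler_wpM2l (ltW (@sqrt2pi_gt0 R)) bu.
have h4 := ler_wpM2l k0 uw.
set u := expR (- (T ^+ 2) / 2) in h2 h4 *; set v := expR (T ^+ 2 / 2) in h3 *.
set e := expR 2^-1 in h3 *.
have -> : (2 + sqrt2pi * v) * b ^+ 2 = 2 * b ^+ 2 + sqrt2pi * (b ^+ 2 * v) by ring.
lra.
Qed.

Lemma exists_tail_level u : 0 < u <= expR (- 2^-1) ->
  exists2 T, 1 <= T & expR (- (T ^+ 2) / 2) = u.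
Proof.
move=> /andP[u0 uu0].
have lnu : ln u <= - 2^-1 by rewrite -(expRK (- 2^-1)) ler_ln ?posrE ?expR_gt0.
have q0 : 0 <= -2 * ln u by lra.
exists (Num.sqrt (-2 * ln u)); last first.
  rewrite sqr_sqrtr //.
  have -> : - (-2 * ln u) / 2 = ln u by field.
  by rewrite lnK ?posrE.
rewrite -[leLHS]sqrtr1 ler_sqrt //; lra.
Qed.

Lemma sqr_mul_eq_powR s t m w : 0 < s -> 0 <= t -> 0 < w -> t `^ s = m / w ->
  t ^+ 2 * w = m `^ (2 / s) * w `^ (1 - 2 / s).
Proof.
move=> s0 t0 w0 ts.
have -> : m = t `^ s * w by rewrite ts divfK ?gt_eqF.
rewrite powRM ?powR_ge0 ?(ltW w0) // -powRrM mulrCA mulfV ?gt_eqF // mulr1.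
rewrite powR_mulrn // -mulrA -powRD; last by rewrite (gt_eqF w0) implybT.
by rewrite addrCA subrr addr0 powRr1 // ltW.
Qed.

Lemma relent_bound_le_scale s a b m w : 0 < s -> 0 < m -> 0 < w ->
  0 <= a -> a <= w -> 0 <= b -> b <= w -> b <= 1 ->
  exists T t, [/\ 1 <= T, 0 < t &
    relent_bound s T t a b m <= relent_C1 * w + relent_C2 * (m `^ (2 / s) * w `^ (1 - 2 / s))].
Proof.
move=> s0 m0 w0 a0 aw b0 bw b1.
set u0 : R := expR (- 2^-1); set u := Order.min w u0.
have u0_gt0 : 0 < u0 := expR_gt0 _.
have u0_le1 : u0 <= 1 by rewrite expR_le1 oppr_le0 invr_ge0 ler0n.
have [T T1 eT] : exists2 T, 1 <= T & expR (- (T ^+ 2) / 2) = u.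
  by apply: exists_tail_level; rewrite lt_min w0 u0_gt0 ge_min lexx orbT.
have eT' : expR (T ^+ 2 / 2) = u^-1 by rewrite -eT -expRN mulNr opprK.
have e2 : expR 2^-1 = u0^-1 by rewrite -expRN opprK.
set t := (m / w) `^ s^-1.
have t0 : 0 < t by rewrite powR_gt0 ?divr_gt0.
have ts : t `^ s = m / w.
  by rewrite -powRrM mulVf ?gt_eqF // powRr1 // ltW ?divr_gt0.
exists T, t; split => //; rewrite -(sqr_mul_eq_powR s0 (ltW t0) w0 ts).
have bw2 : b ^+ 2 <= w by rewrite expr2; nra.
apply: relent_bound_le => //.
- by rewrite eT ge_min lexx.
- rewrite eT' e2 /u minEle; case: ifPn => [wu|]; last first.
    by move=> _; apply: ler_wpM2r => //; rewrite invr_ge0; exact: ltW.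
  have ww : w <= w / u0 by rewrite ler_pdivlMr // ler_piMr // ltW.
  rewrite ler_pdivrMr //; nra.
- by rewrite ts; field; rewrite gt_eqF ?powR_gt0 ?gt_eqF.
Qed.

End scaling.
Arguments relent_C1 {R}.
Arguments relent_C2 {R}.

Section vanishing_scale.
Variable R : realType.
Implicit Types C K r a b e w : R.

Lemma exists_small_scale C K r e : 0 < r < 1 -> 0 <= C -> 0 <= K -> 0 < e ->
  exists2 w, 0 < w & C * w + K * w `^ r <= e.
Proof.
move=> /andP[r0 r1] C0 K0 e0.
have D0 : 0 < C + K + 1 by lra.
set z := Order.min 1 (e / (C + K + 1)).
have z0 : 0 < z by rewrite lt_min ltr01 divr_gt0.
have z1 : z <= 1 by rewrite ge_min lexx.
have ze : (C + K) * z <= e.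
  apply: le_trans (_ : (C + K + 1) * z <= e).
    by apply: ler_wpM2r; [exact: ltW | rewrite lerDl].
  by rewrite mulrC -ler_pdivlMr // ge_min lexx orbT.
exists (z `^ r^-1); first by rewrite powR_gt0.
have zr : z `^ r^-1 `^ r = z by rewrite -powRrM mulVf ?gt_eqF // powRr1 // ltW.
have wz : z `^ r^-1 <= z by rewrite ge1r_powR ?z0 // invf_ge1 // ltW.
rewrite zr; apply: le_trans ze; rewrite mulrDl lerD2r.
exact: ler_wpM2l.
Qed.

Lemma le_at_all_scales (D : \bar R) C K r a b : 0 < r < 1 -> 0 <= C -> 0 <= K ->
  0 <= a -> 0 <= b ->
  (forall w, 0 < w -> a <= w -> b <= w -> (D <= (C * w + K * w `^ r)%:E)%E) ->
  (D <= (C * (a + b) + K * (a + b) `^ r)%:E)%E.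
Proof.
move=> r01 C0 K0 a0 b0 hD.
have [ab0|ab0] := lerP (a + b) 0; last by apply: hD; lra.
have -> : a + b = 0 by lra.
have r0 : r != 0 by case/andP: r01 => r0 _; rewrite gt_eqF.
rewrite powR0 // !mulr0 addr0; apply/lee_addgt0Pr => e e0; rewrite add0e.
have [w w0 hw] := exists_small_scale r01 C0 K0 e0.
by apply: le_trans (hD w w0 _ _) _; rewrite ?lee_fin //; lra.
Qed.

End vanishing_scale.

Theorem corollary2p4 (R : realType) (s : R) (hs : 2 < s) :
  exists C1 C2 : R, 0 < C1 /\ 0 < C2 /\
  forall p : R -> R,
    is_density p -> mean_zero p -> second_moment_one p ->
    (abs_moment s p < +oo)%E ->
    (Lq_dist 2 p <= 1)%E ->
    (Dgauss p <= C1%:E * (Lq_dist 1 p + Lq_dist 2 p)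
       + C2%:E * (abs_moment s p `^ (2 / s))
           * ((Lq_dist 1 p + Lq_dist 2 p) `^ (1 - 2 / s)))%E.
Proof.
exists relent_C1, relent_C2; split; first exact: relent_C1_gt0.
split; first exact: relent_C2_gt0.
move=> p hp _ hm Mfin L2le1.
have s0 : 0 < s by apply: lt_trans hs.
have [a [b [m [[La Lb Mm] [a0 b0 b1 m0]]]]] :=
  Lq_dist_abs_moment_EFin (ltW hs) hp hm Mfin L2le1.
have r01 : 0 < 1 - 2 / s < 1.
  by rewrite subr_gt0 ltr_pdivrMr // mul1r hs ltrBlDr ltrDl divr_gt0.
have C1ge0 := ltW (relent_C1_gt0 R).
have Kge0 := mulr_ge0 (ltW (relent_C2_gt0 R)) (powR_ge0 m (2 / s)).
rewrite La Lb Mm -EFinD; apply: le_at_all_scales => // w w0 aw bw.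
have [T [t [T1 t0 le]]] := relent_bound_le_scale s0 m0 w0 a0 aw b0 bw b1.
apply: le_trans (Dgauss_le_relent_bound (ltW hs) hp T1 t0 La Lb Mm) _.
by rewrite lee_fin -mulrA.
Qed.
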